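(* Let $D=(S\uplus I,A)$ be a directed acyclic graph whose vertex set is partitioned into a set $S$ and a set $I$ of internal vertices, and let $T\subseteq I$ be a set of vertices that are pairwise false twins in $D$. Then among the total elimination sequences of $D$ of minimum cost there is one in which the vertices of $T$ are eliminated consecutively (i.e., they form a contiguous block of the sequence).
   Context: For a DAG $D$ and a vertex $v$, $N^-_D(v)$ and $N^+_D(v)$ are the open in- and out-neighborhoods, and the Markowitz degree is $\mu_D(v)=|N^-_D(v)|\cdot|N^+_D(v)|$. Two vertices $u,v$ are false twins if $N^-_D(u)=N^-_D(v)$ and $N^+_D(u)=N^+_D(v)$. Eliminating $v$ produces $D_{/v}$: delete $v$ and add every arc $(x,y)$ with $x\in N^-_D(v)$, $y\in N^+_D(v)$ not already present. For a sequence $\sigma=(v_1,\dots,v_\ell)$ of distinct internal vertices, $D_\sigma=(((D_{/v_1})_{/v_2})\dots)_{/v_\ell}$; $\sigma$ is total if $\ell=|I|$. The cost of $\sigma$ is $\sum_{i=1}^{\ell}\mu_{D_{(v_1,\dots,v_{i-1})}}(v_i)$, the sum of Markowitz degrees of each vertex at the moment it is eliminated. *)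

(* A DAG on a finite vertex type V is represented by its arc
   set A : {set V * V}; the vertex set is all of V, partitioned into the
   internal vertices I : {set V} and S := ~: I. *)
From mathcomp Require Import all_boot.
Set Implicit Arguments.
Unset Strict Implicit.
Unset Printing Implicit Defensive.

Section Elim.
Variable V : finType.

Definition arcrel (A : {set V * V}) : rel V := fun x y => (x, y) \in A.

Definition acyclic (A : {set V * V}) : Prop :=
  forall x y, (x, y) \in A -> ~~ connect (arcrel A) y x.

Definition Nin (A : {set V * V}) (v : V) : {set V} := [set x | (x, v) \in A].
Definition Nout (A : {set V * V}) (v : V) : {set V} := [set y | (v, y) \in A].

Definition markowitz (A : {set V * V}) (v : V) : nat := #|Nin A v| * #|Nout A v|.

Definition elim (A : {set V * V}) (v : V) : {set V * V} :=
  [set e in A | (e.1 != v) && (e.2 != v)] :|: setX (Nin A v) (Nout A v).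

Fixpoint elim_seq (A : {set V * V}) (s : seq V) : {set V * V} :=
  if s is v :: s' then elim_seq (elim A v) s' else A.

Fixpoint cost (A : {set V * V}) (s : seq V) : nat :=
  if s is v :: s' then markowitz A v + cost (elim A v) s' else 0.

Definition total_seq (I : {set V}) (s : seq V) : Prop := perm_eq s (enum I).

Definition false_twins (A : {set V * V}) (u v : V) : Prop :=
  Nin A u = Nin A v /\ Nout A v = Nout A u.

End Elim.

(* Elimination only adds arcs through the eliminated vertex, so in an acyclic
   graph eliminations commute: D_sigma depends only on the set of eliminated
   vertices.  False twins have no arc between them and stay twins when another
   vertex is eliminated, so k twins eliminated consecutively cost k times the
   Markowitz degree of any one of them.
   Let x sigma be an optimal total sequence.  By induction on its length, the
   twins other than x may be assumed to form a block B in sigma, preceded by a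
   sequence alpha of non-twins.  Counting along alpha the neighbours of each
   vertex inside and outside the twin class gives
     cost (x B alpha ..) + (k - 1) cost (alpha x B ..) <= k cost (x alpha B ..),
   so one of the two orders in which all k twins are contiguous is no more
   expensive. *)

From mathcomp Require Import all_boot zify.
Set Implicit Arguments.
Unset Strict Implicit.
Unset Printing Implicit Defensive.

Section TwinElimination.
Variable V : finType.
Implicit Types (G : {set V * V}) (R : {set V}) (s : seq V).

Lemma in_elim G w p q :
  ((p, q) \in elim G w) =
  ((p, q) \in G) && (p != w) && (q != w) || ((p, w) \in G) && ((w, q) \in G).
Proof. by rewrite !inE /= andbA. Qed.

Lemma acyclic_irrefl G y : acyclic G -> ((y, y) \in G) = false.
Proof. by move=> acG; apply/negP => /acG; rewrite connect0. Qed.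

Lemma acyclic_asym G y z : acyclic G -> (y, z) \in G -> ((z, y) \in G) = false.
Proof. by move=> acG /acG; apply: contraNF => /(@connect1 _ (arcrel G)). Qed.

Lemma acyclic_elim G w : acyclic G -> acyclic (elim G w).
Proof.
move=> acG x y.
have sub : subrel (connect (arcrel (elim G w))) (connect (arcrel G)).
  apply: connect_sub => p q; rewrite /arcrel in_elim.
  case/orP=> [/andP[/andP[pq _] _] | /andP[pw wq]]; first exact: connect1.
  exact: connect_trans (connect1 pw) (connect1 wq).
rewrite in_elim; case/orP=> [/andP[/andP[xy _] _] | /andP[xw wy]].
  by apply: contra (acG _ _ xy) => /sub.
by apply: contra (acG _ _ xw) => /sub yx; apply: connect_trans (connect1 wy) yx.
Qed.

(* Both sides consist of the arcs through a and/or b; they could only differ on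
   loops and on walks a -> b -> a, which acyclicity excludes. *)
Lemma elimC G a b : acyclic G -> elim (elim G a) b = elim (elim G b) a.
Proof.
move=> acG; apply/setP => -[p q]; rewrite !in_elim.
have [-> //|ab] := eqVneq a b.
have irr y := @acyclic_irrefl G y acG.
have nab : ~~ ((a, b) \in G) || ~~ ((b, a) \in G).
  by case: ((a, b) \in G) (@acyclic_asym G a b acG) => // /(_ isT) ->.
have [pa|pa] := eqVneq p a; have [pb|pb] := eqVneq p b;
have [qa|qa] := eqVneq q a; have [qb|qb] := eqVneq q b;
try by case/eqP: ab; rewrite -pa -pb.
all: try by case/eqP: ab; rewrite -qa -qb.
all: rewrite ?pa ?pb ?qa ?qb ?eqxx ?irr ?(negbTE ab) ?(eq_sym b a) ?(negbTE ab) /=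
  ?andbT ?andbF ?orbF //.
all: move: nab; case: ((a, b) \in G); case: ((b, a) \in G) => // _.
all: case: ((p, q) \in G); case: ((p, a) \in G); case: ((a, q) \in G);
  case: ((p, b) \in G); case: ((b, q) \in G) => //.
Qed.

Lemma acyclic_elim_seq G s : acyclic G -> acyclic (elim_seq G s).
Proof. by elim: s G => [|v s IHs] G //= acG; apply/IHs/acyclic_elim. Qed.

Lemma elim_seq_cat G s (t : seq V) : elim_seq G (s ++ t) = elim_seq (elim_seq G s) t.
Proof. by elim: s G => //= v s IHs G; rewrite IHs. Qed.

Lemma cost_cat G s (t : seq V) : cost G (s ++ t) = cost G s + cost (elim_seq G s) t.
Proof. by elim: s G => //= v s IHs G; rewrite IHs addnA. Qed.

Lemma elim_seq_cons_last G v s :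
  acyclic G -> elim_seq G (v :: s) = elim (elim_seq G s) v.
Proof.
elim: s G => [|w s IHs] G acG //=.
by rewrite elimC // -IHs //; apply: acyclic_elim.
Qed.

Lemma perm_elim_seq G s (t : seq V) :
  acyclic G -> perm_eq s t -> elim_seq G s = elim_seq G t.
Proof.
elim: s G t => [|v s IHs] G t acG; first by rewrite perm_sym => /perm_nilP ->.
move=> eq_st; have vt : v \in t by rewrite -(perm_mem eq_st) mem_head.
case/splitPr: vt eq_st => t1 t2 eq_st.
rewrite [LHS]/=; have /(IHs _ _ (acyclic_elim (w := v) acG)) -> : perm_eq s (t1 ++ t2).
  by rewrite -(perm_cons v); apply: perm_trans eq_st _; rewrite (perm_catCA t1 [:: v] t2).
change (elim_seq G ((v :: t1) ++ t2) = elim_seq G (t1 ++ [:: v] ++ t2)).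
by rewrite !elim_seq_cat elim_seq_cons_last.
Qed.

Lemma false_twins_sym G u v : false_twins G u v -> false_twins G v u.
Proof. by case=> ? ?; split. Qed.

Lemma false_twins_in G u v y : false_twins G u v -> ((y, u) \in G) = ((y, v) \in G).
Proof. by case=> /setP /(_ y); rewrite !inE. Qed.

Lemma false_twins_out G u v y : false_twins G u v -> ((u, y) \in G) = ((v, y) \in G).
Proof. by case=> _ /setP /(_ y); rewrite !inE. Qed.

Lemma false_twins_arc G u v : acyclic G -> false_twins G u v -> ((u, v) \in G) = false.
Proof. by move=> acG /(false_twins_in u) <-; apply: acyclic_irrefl. Qed.

Lemma false_twins_elim G u v w :
  false_twins G u v -> w != u -> w != v -> false_twins (elim G w) u v.
Proof.
move=> uv wu wv; split; apply/setP => y; rewrite !inE /= !(eq_sym _ w) wu wv.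
  by rewrite (false_twins_in y uv) (false_twins_in w uv).
by rewrite (false_twins_out y uv) (false_twins_out w uv).
Qed.

Lemma twin_class_elim (pT : predType V) (R : pT) G w :
  {in R &, forall u v, false_twins G u v} ->
  w \notin R -> {in R &, forall u v, false_twins (elim G w) u v}.
Proof.
move=> twR wR u v uR vR.
by apply: false_twins_elim (twR u v uR vR) _ _; apply: contraNneq wR => ->.
Qed.

Lemma twin_class_elim_seq (pT : predType V) (R : pT) G s :
  {in R &, forall u v, false_twins G u v} -> all [predC R] s ->
  {in R &, forall u v, false_twins (elim_seq G s) u v}.
Proof.
elim: s G => [|w s IHs] G //= twR /andP[wR sR].
by apply: IHs sR; apply: twin_class_elim.
Qed.

Lemma twin_block_elim_head G t s : uniq (t :: s) ->
  {in t :: s &, forall u v, false_twins G u v} ->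
  {in s &, forall u v, false_twins (elim G t) u v}.
Proof.
move=> /andP[ts _] tw u v us vs.
apply: false_twins_elim; first by apply: tw; rewrite inE ?us ?vs orbT.
  by apply: contraNneq ts => ->.
by apply: contraNneq ts => ->.
Qed.

Lemma Nin_elim_twin G t u : acyclic G -> false_twins G u t -> u != t ->
  Nin (elim G t) u = Nin G t.
Proof.
move=> acG ut ut_neq; apply/setP => p; rewrite !inE /= (false_twins_in p ut) ut_neq.
rewrite (false_twins_arc acG (false_twins_sym ut)) andbF orbF andbT.
by case: eqVneq => [->|]; rewrite ?acyclic_irrefl ?andbT.
Qed.

Lemma Nout_elim_twin G t u : acyclic G -> false_twins G u t -> u != t ->
  Nout (elim G t) u = Nout G t.
Proof.
move=> acG ut ut_neq; apply/setP => q; rewrite !inE /= (false_twins_out q ut) ut_neq.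
rewrite (false_twins_arc acG ut) andFb orbF /=.
by case: eqVneq => [->|]; rewrite ?acyclic_irrefl ?andbT.
Qed.

Lemma markowitz_elim_twin G t u : acyclic G -> false_twins G u t -> u != t ->
  markowitz (elim G t) u = markowitz G t.
Proof. by move=> acG ut tu; rewrite /markowitz Nin_elim_twin // Nout_elim_twin. Qed.

Lemma cost_twin_block G t s : acyclic G -> uniq (t :: s) ->
  {in t :: s &, forall u v, false_twins G u v} ->
  cost G (t :: s) = (size s).+1 * markowitz G t.
Proof.
elim: s G t => [|u s IHs] G t acG uniq_ts tw; first by rewrite /= addn0 mul1n.
have tu : u != t by apply: contraTneq uniq_ts => ->; rewrite /= mem_head.
have ut : false_twins G u t by apply: tw; rewrite !inE eqxx ?orbT.
have [_ uniq_us] := andP uniq_ts.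
change (cost G (t :: u :: s)) with (markowitz G t + cost (elim G t) (u :: s)).
rewrite (IHs _ _ (acyclic_elim acG) uniq_us (twin_block_elim_head uniq_ts tw)).
by rewrite markowitz_elim_twin // [RHS]mulSn.
Qed.

Lemma cost_elim_twin_block G t s : acyclic G -> uniq (t :: s) ->
  {in t :: s &, forall u v, false_twins G u v} ->
  cost (elim G t) s = size s * markowitz G t.
Proof.
move=> acG uniq_ts tw.
by have /= := cost_twin_block acG uniq_ts tw; rewrite mulSn => /addnI.
Qed.

Lemma in_elim_twin_block G t s p q : acyclic G -> uniq (t :: s) ->
  {in t :: s &, forall u v, false_twins G u v} ->
  ((p, q) \in elim_seq G (t :: s)) =
  ((p, q) \in G) && (p \notin t :: s) && (q \notin t :: s)
  || ((p, t) \in G) && ((t, q) \in G).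
Proof.
elim: s G t => [|u s IHs] G t acG uniq_ts tw; first by rewrite /= in_elim !mem_seq1.
have tu : u != t by apply: contraTneq uniq_ts => ->; rewrite /= mem_head.
have ut : false_twins G u t by apply: tw; rewrite !inE eqxx ?orbT.
have [_ uniq_us] := andP uniq_ts.
change (elim_seq G (t :: u :: s)) with (elim_seq (elim G t) (u :: s)).
rewrite (IHs _ _ (acyclic_elim acG) uniq_us (twin_block_elim_head uniq_ts tw)).
have /setP/(_ p) := Nin_elim_twin acG ut tu; have /setP/(_ q) := Nout_elim_twin acG ut tu.
rewrite !inE /= => -> ->.
case: ((p, t) \in G); case: ((t, q) \in G); rewrite ?orbT ?andbF ?orbF //=.
all: by case: (p == t); case: (q == t); rewrite /= ?andbF ?andbT /=.
Qed.

Lemma card_split (S R R' : {set V}) (c : bool) :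
  S :&: R = (if c then R' else set0) -> #|S| = #|S :\: R| + c * #|R'|.
Proof. by rewrite -(cardsID R S) addnC => ->; case: c; rewrite ?cards0 ?mul1n. Qed.

(* [f0, g0] and [f1, g1] count in- and out-neighbours outside a block of [n.+1]
   twins before and after eliminating one of them; [e] and [h] record an arc
   from, resp. to, the block. *)
Lemma markowitz_avg_arith n f0 f1 g0 g1 (e h : bool) :
  f0 <= f1 -> g0 <= g1 -> ~~ (e && h) ->
  f1 * g1 + n * ((f0 + e * n.+1) * (g0 + h * n.+1)) <=
  n.+1 * ((f1 + e * n) * (g1 + h * n)).
Proof.
move=> le_f le_g; have le_fg : f0 * g0 <= f1 * g1 by apply: leq_mul.
by case: e; case: h => //= _; rewrite ?mul1n ?mul0n ?addn0; nia.
Qed.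

Section TwinBlockNeighbours.
Variables (G : {set V * V}) (x a : V) (q : seq V).
Hypotheses (acG : acyclic G) (uniq_xq : uniq (x :: q))
  (tw : {in x :: q &, forall u v, false_twins G u v}) (a_xq : a \notin x :: q).
Let R := [set u in x :: q].

Let x_xq : x \in x :: q := mem_head x q.
Let ax : a != x. Proof. by apply: contraNneq a_xq => ->. Qed.
Let neq_x p : p \notin x :: q -> p != x. Proof. by apply: contraNneq => ->. Qed.
Let no_arc_x p : p \in x :: q -> ((p, x) \in G) = false /\ ((x, p) \in G) = false.
Proof. by move=> p_xq; split; apply: (false_twins_arc acG); apply: tw. Qed.

Lemma card_twin_block : #|R| = (size q).+1.
Proof. by rewrite cardsE; apply/card_uniqP. Qed.

Lemma card_twin_block_D1 : #|R :\ x| = size q.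
Proof. by have := cardsD1 x R; rewrite card_twin_block in_set x_xq add1n => -[<-]. Qed.

Lemma Nin_twin_block :
  [/\ Nin (elim_seq G (x :: q)) a \subset Nin (elim G x) a :\: R,
      Nin G a :\: R \subset Nin (elim G x) a :\: R,
      #|Nin G a| = #|Nin G a :\: R| + ((x, a) \in G) * (size q).+1
    & #|Nin (elim G x) a| = #|Nin (elim G x) a :\: R| + ((x, a) \in G) * size q].
Proof.
split.
- apply/subsetP => p; rewrite !(in_setD, in_set) in_elim_twin_block //= ax andbT.
  case/orP=> [/andP[/andP[pa p_xq] _] | /andP[px ->]]; first by rewrite p_xq pa neq_x.
  by rewrite px orbT andbT; apply: contraTN px => /no_arc_x[->].
- apply/subsetP => p; rewrite !(in_setD, in_set) /= ax andbT.
  by case/andP=> p_xq ->; rewrite p_xq neq_x.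
- rewrite (@card_split _ R R ((x, a) \in G)) ?card_twin_block //.
  apply/setP => p; rewrite in_setI !in_set.
  case p_xq: (p \in x :: q); rewrite ?andbT ?(false_twins_out a (tw p_xq x_xq)) ?andbF;
    by case: ((x, a) \in G); rewrite ?in_set0 ?in_set ?p_xq.
- rewrite (@card_split _ R (R :\ x) ((x, a) \in G)) ?card_twin_block_D1 //.
  apply/setP => p; rewrite !(in_setI, in_setD1, in_set) /= ax andbT.
  case p_xq: (p \in x :: q); rewrite ?andbF.
    rewrite andbT (false_twins_out a (tw p_xq x_xq)) (proj1 (no_arc_x p_xq)) orbF.
    by case: ((x, a) \in G); rewrite ?in_setD1 ?in_set ?p_xq ?andbT.
  by case: ((x, a) \in G); rewrite ?in_set0 ?in_setD1 ?in_set ?p_xq ?andbF.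
Qed.

Lemma Nout_twin_block :
  [/\ Nout (elim_seq G (x :: q)) a \subset Nout (elim G x) a :\: R,
      Nout G a :\: R \subset Nout (elim G x) a :\: R,
      #|Nout G a| = #|Nout G a :\: R| + ((a, x) \in G) * (size q).+1
    & #|Nout (elim G x) a| = #|Nout (elim G x) a :\: R| + ((a, x) \in G) * size q].
Proof.
split.
- apply/subsetP => p; rewrite !(in_setD, in_set) in_elim_twin_block //= ax.
  case/orP=> [/andP[/andP[ap _] p_xq] | /andP[-> xp]]; first by rewrite p_xq ap neq_x.
  by rewrite xp orbT andbT; apply: contraTN xp => /no_arc_x[_ ->].
- apply/subsetP => p; rewrite !(in_setD, in_set) /= ax.
  by case/andP=> p_xq ->; rewrite p_xq neq_x.
- rewrite (@card_split _ R R ((a, x) \in G)) ?card_twin_block //.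
  apply/setP => p; rewrite in_setI !in_set.
  case p_xq: (p \in x :: q); rewrite ?andbT ?(false_twins_in a (tw p_xq x_xq)) ?andbF;
    by case: ((a, x) \in G); rewrite ?in_set0 ?in_set ?p_xq.
- rewrite (@card_split _ R (R :\ x) ((a, x) \in G)) ?card_twin_block_D1 //.
  apply/setP => p; rewrite !(in_setI, in_setD1, in_set) /= ax.
  case p_xq: (p \in x :: q); rewrite ?andbF.
    rewrite andbT (false_twins_in a (tw p_xq x_xq)) (proj2 (no_arc_x p_xq)) andbF orbF.
    by case: ((a, x) \in G); rewrite ?in_setD1 ?in_set ?p_xq ?andbT.
  by case: ((a, x) \in G); rewrite ?in_set0 ?in_setD1 ?in_set ?p_xq ?andbF.
Qed.

Lemma markowitz_twin_block_avg :
  markowitz (elim_seq G (x :: q)) a + size q * markowitz G a <=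
  (size q).+1 * markowitz (elim G x) a.
Proof.
rewrite /markowitz; have [sub_Yin sub_Gin -> ->] := Nin_twin_block.
have [sub_Yout sub_Gout -> ->] := Nout_twin_block.
have le_Y := leq_mul (subset_leq_card sub_Yin) (subset_leq_card sub_Yout).
apply: leq_trans (leq_add le_Y (leqnn _)) _.
apply: markowitz_avg_arith; rewrite ?subset_leq_card //.
by case xa: ((x, a) \in G); rewrite // (acyclic_asym acG xa).
Qed.
End TwinBlockNeighbours.

Lemma cost_twin_block_avg G x q al : acyclic G -> uniq (x :: q) ->
  {in x :: q &, forall u v, false_twins G u v} -> all [predC x :: q] al ->
  cost (elim_seq G (x :: q)) al + size q * cost G al <=
  (size q).+1 * cost (elim G x) al.
Proof.
elim: al G => [|a al IHal] G acG uniq_xq tw //= /andP[a_xq al_xq].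
rewrite !mulnDr addnACA leq_add ?markowitz_twin_block_avg //.
have -> : elim (elim_seq G (x :: q)) a = elim_seq (elim G a) (x :: q).
  rewrite -[elim _ a]/(elim_seq _ [:: a]) -elim_seq_cat.
  by rewrite (perm_elim_seq (t := a :: x :: q) acG) // perm_sym -cat1s perm_catC.
rewrite elimC //; apply: IHal => //; first exact: acyclic_elim.
exact: twin_class_elim.
Qed.

Lemma cost_twin_block_shift G x q al b : acyclic G -> uniq (x :: q) ->
  {in x :: q &, forall u v, false_twins G u v} -> all [predC x :: q] al ->
  cost G (x :: q ++ al ++ b) + size q * cost G (al ++ x :: q ++ b) <=
  (size q).+1 * cost G (x :: al ++ q ++ b).
Proof.
move=> acG uniq_xq tw al_xq.
set H := elim_seq G al.
have acH : acyclic H by apply: acyclic_elim_seq.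
have twH : {in x :: q &, forall u v, false_twins H u v} by apply: twin_class_elim_seq.
set E := elim_seq G (al ++ x :: q).
have block_first_E : elim_seq G (x :: q ++ al) = E.
  by apply: perm_elim_seq => //; rewrite -cat_cons perm_catC.
have split_E : elim_seq (elim H x) q = E.
  rewrite -elim_seq_cons_last // -elim_seq_cat; apply: perm_elim_seq => //.
  by rewrite perm_sym -cat1s perm_catCA.
have split_H : elim_seq (elim G x) al = elim H x by rewrite -elim_seq_cons_last.
have cost_block_first : cost G (x :: q ++ al ++ b) =
    (size q).+1 * markowitz G x + cost (elim_seq G (x :: q)) al + cost E b.
  by rewrite -cat_cons !cost_cat cost_twin_block // -elim_seq_cat block_first_E addnA.
have cost_block_after : cost G (al ++ x :: q ++ b) =
    cost G al + (size q).+1 * markowitz H x + cost E b.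
  by rewrite -cat_cons !cost_cat cost_twin_block // -elim_seq_cat addnA.
have cost_split : cost G (x :: al ++ q ++ b) =
    markowitz G x + cost (elim G x) al + size q * markowitz H x + cost E b.
  rewrite [LHS]/= !cost_cat split_H (cost_elim_twin_block acH uniq_xq twH) split_E.
  by rewrite !addnA.
have := cost_twin_block_avg acG uniq_xq tw al_xq.
rewrite cost_block_first cost_block_after cost_split; nia.
Qed.

Lemma leq_avg_or n x y z : y + n * z <= n.+1 * x -> (y <= x) || (z <= x).
Proof. by apply: contraLR; rewrite negb_or -!ltnNge => /andP[? ?]; nia. Qed.

Definition contiguous_in R s :=
  exists s1 s2 s3, s = s1 ++ s2 ++ s3 /\ perm_eq s2 (enum R).

Lemma twin_block_extend G R x q al b : acyclic G ->
  {in R &, forall u v, false_twins G u v} -> x \in R ->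
  perm_eq q (enum (R :\ x)) -> all [predC R] al ->
  exists2 s, perm_eq s (x :: al ++ q ++ b) &
    cost G s <= cost G (x :: al ++ q ++ b) /\ contiguous_in R s.
Proof.
move=> acG twR xR q_R al_R.
have mem_xq u : (u \in x :: q) = (u \in R).
  by rewrite inE (perm_mem q_R) mem_enum !inE; case: eqVneq => [->|].
have uniq_xq : uniq (x :: q).
  by rewrite /= (perm_uniq q_R) enum_uniq (perm_mem q_R) mem_enum setD11.
have tw : {in x :: q &, forall u v, false_twins G u v}.
  by apply: sub_in2 twR => u; rewrite mem_xq.
have al_xq : all [predC x :: q] al.
  by apply: sub_all al_R => u; rewrite /= mem_xq.
have block : perm_eq (x :: q) (enum R).
  by apply: uniq_perm; rewrite ?enum_uniq // => u; rewrite mem_xq mem_enum.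
case/orP: (leq_avg_or (cost_twin_block_shift b acG uniq_xq tw al_xq))
  => [le_block_first | le_block_after].
  exists (x :: q ++ al ++ b).
    by rewrite perm_cons perm_catCA.
  by split=> //; exists [::], (x :: q), (al ++ b).
exists (al ++ x :: q ++ b).
  by rewrite -cat1s perm_catCA.
by split=> //; exists al, (x :: q), b.
Qed.

Lemma exists_contiguous_reordering G R s : acyclic G ->
  {in R &, forall u v, false_twins G u v} -> uniq s -> {subset R <= s} ->
  exists2 s', perm_eq s' s & cost G s' <= cost G s /\ contiguous_in R s'.
Proof.
elim: s G R => [|x s IHs] G R acG twR uniq_s R_s.
  exists [::] => //; split=> //; exists [::], [::], [::]; split=> //.
  apply: uniq_perm; rewrite ?enum_uniq // => u.
  by rewrite mem_enum; apply/esym/negP => /R_s.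
case/andP: uniq_s => x_s uniq_s.
have acGx : acyclic (elim G x) by apply: acyclic_elim.
have R_s' (R' : {set V}) : x \notin R' -> R' \subset R -> {subset R' <= s}.
  move=> xR' /subsetP sR' u uR'; have := R_s u (sR' u uR').
  by rewrite inE; case: eqVneq uR' xR' => [-> -> //|_ _ _].
have [xR|xR] := boolP (x \in R); last first.
  have [s' perm_s' [le_s' [s1 [s2 [s3 [def_s' block]]]]]] :=
    IHs _ _ acGx (twin_class_elim twR xR) uniq_s (R_s' R xR (subxx R)).
  exists (x :: s'); first by rewrite perm_cons.
  by split; [rewrite /= leq_add2l | exists (x :: s1), s2, s3; rewrite def_s'].
have x_Rx : x \notin R :\ x by rewrite setD11.
have twRx : {in R :\ x &, forall u v, false_twins (elim G x) u v}.
  by apply: twin_class_elim x_Rx; apply: sub_in2 twR => u /setD1P[].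
have [s' perm_s' [le_s' [s1 [q [s3 [def_s' q_R]]]]]] :=
  IHs _ _ acGx twRx uniq_s (R_s' _ x_Rx (subD1set R x)).
have s1_R : all [predC R] s1.
  apply/allP => u u_s1; rewrite inE.
  have : uniq s' by rewrite (perm_uniq perm_s').
  rewrite def_s' cat_uniq => /and3P[_ /hasPn s1_q _].
  have u_q : u \notin q by apply: contraL u_s1 => u_q; apply: s1_q; rewrite mem_cat u_q.
  have u_s : u \in s by rewrite -(perm_mem perm_s') def_s' mem_cat u_s1.
  apply: contra u_q => uR.
  by rewrite (perm_mem q_R) mem_enum !inE uR andbT; apply: contraNneq x_s => <-.
have [s'' perm_s'' [le_s'' contig]] := twin_block_extend s3 acG twR xR q_R s1_R.
exists s''; first by apply: perm_trans perm_s'' _; rewrite perm_cons -def_s'.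
by split=> //; apply: leq_trans le_s'' _; rewrite -def_s' /= leq_add2l.
Qed.
End TwinElimination.

Lemma perm_arg_min (T : eqType) (f : seq T -> nat) (r : seq T) :
  exists2 s, perm_eq s r & forall s', perm_eq s' r -> f s <= f s'.
Proof.
have ex_n : exists n, has (fun s => f s == n) (permutations r).
  by exists (f r); apply/hasP; exists r; rewrite ?mem_permutations.
case: (ex_minnP ex_n) => n /hasP[s s_r /eqP <-] min_n.
exists s => [|s' s'_r]; first by rewrite -mem_permutations.
by apply: min_n; apply/hasP; exists s'; rewrite ?mem_permutations.
Qed.

Theorem proposition2 (V : finType) (A : {set V * V}) (I T : {set V}) :
  acyclic A ->
  T \subset I ->
  (forall u v, u \in T -> v \in T -> false_twins A u v) ->
  exists s : seq V,
    [/\ total_seq I s,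
        (forall s' : seq V, total_seq I s' -> cost A s <= cost A s')
      & exists s1 s2 s3 : seq V, s = s1 ++ s2 ++ s3 /\ perm_eq s2 (enum T)].
Proof.
move=> acA /subsetP TI twT.
have [s s_I s_opt] := perm_arg_min (cost A) (enum I).
have uniq_s : uniq s by rewrite (perm_uniq s_I) enum_uniq.
have T_s : {subset T <= s} by move=> u /TI; rewrite (perm_mem s_I) mem_enum.
have [s' s'_s [le_s' contig]] := exists_contiguous_reordering acA twT uniq_s T_s.
exists s'; split=> // [|s'' s''_I]; first exact: perm_trans s'_s s_I.
exact: leq_trans le_s' (s_opt s'' s''_I).
Qed.
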